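(* Let $d\in\mathbb{Z}_2^{l+r}$ and let $A\subset\mathbb{Z}_2^{l+r}$ be a subgroup. Then $d(A^\perp)=(A^d)^{\perp_d}$, where $d(A^\perp)=\{d\alpha:\alpha\in A^\perp\}$.
   Context: Products of codewords are componentwise. For $c\in\mathbb{Z}_2^{l+r}$, $|c|=|c|_l-|c|_r$, where $|c|_l,|c|_r$ are the numbers of ones in the first $l$ and last $r$ coordinates. $A^\perp=\{\beta\in\mathbb{Z}_2^{l+r}:|\beta a|\in2\mathbb{Z}\ \forall a\in A\}$. $\mathbb{Z}_2^d=\{\alpha:d\alpha=\alpha\}$, $A^d=A\cap\mathbb{Z}_2^d$, and for a subgroup $H\subset\mathbb{Z}_2^d$, $H^{\perp_d}=\{\alpha\in\mathbb{Z}_2^d:|\alpha h|\in2\mathbb{Z}\ \forall h\in H\}$. *)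

From mathcomp Require Import all_boot all_order all_algebra.
Set Implicit Arguments. Unset Strict Implicit. Unset Printing Implicit Defensive.
Import GRing.Theory.
Local Open Scope ring_scope.

Definition vec (l r : nat) := 'rV['F_2]_(l + r).

Definition cmul (l r : nat) (a b : vec l r) : vec l r :=
  \row_i (a 0 i * b 0 i).

Definition wt_l (l r : nat) (c : vec l r) : nat :=
  #|[set i : 'I_(l + r) | (i < l)%N && (c 0 i != 0)]|.
Definition wt_r (l r : nat) (c : vec l r) : nat :=
  #|[set i : 'I_(l + r) | (l <= i)%N && (c 0 i != 0)]|.

Definition sw (l r : nat) (c : vec l r) : int := (wt_l c)%:Z - (wt_r c)%:Z.

Definition evenZ (z : int) : bool := (2 %| z)%Z.

Definition is_subgroup (l r : nat) (A : {set vec l r}) : Prop :=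
  (0 \in A) /\ (forall x y, x \in A -> y \in A -> x + y \in A)
  /\ (forall x, x \in A -> - x \in A).

Definition perp (l r : nat) (A : {set vec l r}) : {set vec l r} :=
  [set b | [forall a in A, evenZ (sw (cmul b a))]].

Definition Z2d (l r : nat) (d : vec l r) : {set vec l r} :=
  [set a | cmul d a == a].

Definition restr (l r : nat) (A : {set vec l r}) (d : vec l r) : {set vec l r} :=
  A :&: Z2d d.

Definition perp_d (l r : nat) (d : vec l r) (H : {set vec l r}) : {set vec l r} :=
  [set a in Z2d d | [forall h in H, evenZ (sw (cmul a h))]].

Definition dimage (l r : nat) (d : vec l r) (S : {set vec l r}) : {set vec l r} :=
  [set cmul d a | a in S].

From mathcomp Require Import all_boot all_order all_algebra.
From mathcomp Require Import zify.
Set Implicit Arguments. Unset Strict Implicit.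
Import GRing.Theory.
Local Open Scope ring_scope.

(** Over F_2 the parity of the signed weight [|b a|] is the parity of the
    number of ones of [b a], i.e. the dot product [b . a]; so [A^perp] is the
    ordinary orthogonal of [A] and [H^{perp_d}] is [Z_2^d] meet [H^perp].
    Multiplication by [d] is an idempotent self-adjoint map, which gives
    [d(A^perp) ⊆ (A^d)^{perp_d}].  Conversely, subspaces equal their double
    orthogonal: if [h] is orthogonal to [d(A^perp)] then [d h] is orthogonal to
    [A^perp], so [d h ∈ A^d], and any [x = d x] orthogonal to [A^d] satisfies
    [x . h = x . (d h) = 0]; hence [x ∈ d(A^perp)^perp^perp = d(A^perp)]. *)

Section OrthogonalSet.
Variables (F : finFieldType) (n : nat).
Implicit Types (u v : 'rV[F]_n) (S : {set 'rV[F]_n}).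

Definition dotmx u v : F := (u *m v^T) 0 0.

Definition orthset S : {set 'rV[F]_n} := [set u | [forall v in S, dotmx u v == 0]].

Definition rowset m (M : 'M[F]_(m, n)) : {set 'rV[F]_n} := [set u | (u <= M)%MS].

Lemma dotmxZDl a u w v : dotmx (a *: u + w) v = a * dotmx u v + dotmx w v.
Proof. by rewrite /dotmx mulmxDl -scalemxAl !mxE. Qed.

Lemma orthset_submod_closed S : submod_closed (orthset S).
Proof.
split.
  by rewrite inE; apply/forall_inP => v _; rewrite /dotmx mul0mx mxE.
move=> a u w; rewrite !inE => /forall_inP Su /forall_inP Sw.
apply/forall_inP => v Sv.
by rewrite dotmxZDl (eqP (Su v Sv)) (eqP (Sw v Sv)) mulr0 addr0.
Qed.

Lemma orthset_rowset m (M : 'M[F]_(m, n)) : orthset (rowset M) = rowset (kermx M^T).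
Proof.
apply/setP => u; rewrite !inE sub_kermx; apply/forall_inP/eqP => [uM | uM0 v].
  apply/rowP => j; rewrite [RHS]mxE.
  have /eqP <- : dotmx u (row j M) == 0 by rewrite uM // inE row_sub.
  by rewrite /dotmx !mxE; apply: eq_bigr => k _; rewrite !mxE.
by rewrite inE => /submxP [w ->]; rewrite /dotmx trmx_mul mulmxA uM0 mul0mx mxE.
Qed.

Lemma kermx_kermx_tr m (M : 'M[F]_(m, n)) : (kermx (kermx M^T)^T == M)%MS.
Proof.
have sub_M : (M <= kermx (kermx M^T)^T)%MS.
  by rewrite sub_kermx -[X in X *m _]trmxK -trmx_mul mulmx_ker trmx0.
apply/andP; split=> //; have [_ <-] := mxrank_leqif_sup sub_M.
by rewrite mxrank_ker mxrank_tr mxrank_ker mxrank_tr subKn ?rank_leq_col.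
Qed.

Lemma orthset_orthset_rowset m (M : 'M[F]_(m, n)) :
  orthset (orthset (rowset M)) = rowset M.
Proof.
by rewrite !orthset_rowset; apply/setP => u; rewrite !inE (eqmxP (kermx_kermx_tr M)).
Qed.

Lemma rowset_enum S :
  submod_closed S -> rowset (\matrix_(i < #|S|) nth 0 (enum S) i) = S.
Proof.
move=> [S0 Slin]; have nth_S (i : 'I_#|S|) : nth 0 (enum S) i \in S.
  by rewrite -mem_enum mem_nth // -cardE.
apply/setP => u; rewrite inE; apply/idP/idP => [/submxP [w ->] | Su].
  rewrite mulmx_sum_row; apply: (big_ind (fun v => v \in S)) => //.
    by move=> v1 v2 Sv1 Sv2; rewrite -[v1]scale1r Slin.
  by move=> i _; rewrite -[_ *: _]addr0 Slin // rowK.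
have idx_lt : (index u (enum S) < #|S|)%N by rewrite cardE index_mem mem_enum.
by have := row_sub (Ordinal idx_lt) (\matrix_(i < #|S|) nth 0 (enum S) i);
  rewrite rowK nth_index ?mem_enum.
Qed.

Lemma orthsetK S : submod_closed S -> orthset (orthset S) = S.
Proof. by move=> Ssub; rewrite -(rowset_enum Ssub) orthset_orthset_rowset. Qed.

End OrthogonalSet.

Lemma F2_eq_nat (x : 'F_2) : x = (x != 0)%:R.
Proof. by case: x => [[|[|k]] //] lt_k2; apply: val_inj. Qed.

Lemma F2_nat_odd (k : nat) : (k%:R : 'F_2) = (odd k)%:R.
Proof. by rewrite -modn2 -[in LHS](@Fp_nat_mod 2). Qed.

Lemma F2_mulxx (x : 'F_2) : x * x = x.
Proof. by rewrite [x]F2_eq_nat; case: (x != 0); rewrite ?mul0r ?mul1r. Qed.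

Lemma F2_submod_closed n (S : {set 'rV['F_2]_n}) :
  0 \in S -> {in S &, forall u v, u + v \in S} -> submod_closed S.
Proof.
move=> S0 SD; split=> // a u v Su Sv.
by rewrite [a]F2_eq_nat; case: (a != 0); rewrite ?scale0r ?add0r ?scale1r ?SD.
Qed.

Lemma is_subgroup_submod_closed l r (A : {set vec l r}) :
  is_subgroup A -> submod_closed A.
Proof. by move=> [A0 [AD _]]; apply: F2_submod_closed. Qed.

Lemma sum_F2_odd_support n (c : 'rV['F_2]_n) :
  \sum_i c 0 i = (odd #|[set i | c 0 i != 0]|)%:R.
Proof.
rewrite -F2_nat_odd -sum1_card natr_sum [RHS]big_mkcond /=.
by apply: eq_bigr => i _; rewrite inE [LHS]F2_eq_nat; case: (c 0 i != 0).
Qed.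

Lemma wt_l_add_wt_r l r (c : vec l r) :
  (wt_l c + wt_r c)%N = #|[set i | c 0 i != 0]|.
Proof.
rewrite -(cardID [pred i : 'I_(l + r) | (i < l)%N] [set i | c 0 i != 0]).
congr (_ + _)%N; apply: eq_card => i; rewrite !inE /=.
  by rewrite andbC.
by rewrite leqNgt andbC.
Qed.

Lemma evenZ_sw l r (c : vec l r) : evenZ (sw c) = ~~ odd #|[set i | c 0 i != 0]|.
Proof. rewrite /evenZ /sw -wt_l_add_wt_r -dvdn2; apply/idP/idP; lia. Qed.

Lemma evenZ_sw_cmul l r (b a : vec l r) : evenZ (sw (cmul b a)) = (dotmx b a == 0).
Proof.
have -> : dotmx b a = \sum_i cmul b a 0 i.
  by rewrite /dotmx mxE; apply: eq_bigr => i _; rewrite !mxE.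
by rewrite evenZ_sw sum_F2_odd_support; case: odd; rewrite ?oner_eq0 ?eqxx.
Qed.

Lemma perpE l r (A : {set vec l r}) : perp A = orthset A.
Proof.
by apply/setP => b; rewrite !inE; apply: eq_forallb => a; rewrite evenZ_sw_cmul.
Qed.

Lemma perp_dE l r (d : vec l r) (H : {set vec l r}) :
  perp_d d H = Z2d d :&: orthset H.
Proof.
apply/setP => b; rewrite !inE; congr (_ && _).
by apply: eq_forallb => h; rewrite evenZ_sw_cmul.
Qed.

Section Mask.
Variables (l r : nat) (d : vec l r).

Lemma cmul_idem a : cmul d (cmul d a) = cmul d a.
Proof. by apply/rowP => i; rewrite !mxE mulrA F2_mulxx. Qed.

Lemma cmul_Z2d a : cmul d a \in Z2d d.
Proof. by rewrite inE cmul_idem. Qed.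

Lemma dotmx_cmul a b : dotmx (cmul d a) b = dotmx a (cmul d b).
Proof. by rewrite /dotmx !mxE; apply: eq_bigr => k _; rewrite !mxE mulrCA mulrA. Qed.

Lemma dimage_submod_closed (S : {set vec l r}) :
  submod_closed S -> submod_closed (dimage d S).
Proof.
move=> [S0 Slin]; apply: F2_submod_closed.
  by apply/imsetP; exists 0 => //; apply/rowP => i; rewrite !mxE mulr0.
move=> _ _ /imsetP [a Sa ->] /imsetP [b Sb ->]; apply/imsetP; exists (a + b).
  by rewrite -[a]scale1r Slin.
by apply/rowP => i; rewrite !mxE mulrDr.
Qed.

Lemma dimage_orthset_sub (A : {set vec l r}) :
  dimage d (orthset A) \subset Z2d d :&: orthset (restr A d).
Proof.
apply/subsetP => _ /imsetP [a aA ->]; rewrite inE cmul_Z2d inE.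
apply/forall_inP => h; rewrite !inE => /andP [hA /eqP hd].
by rewrite dotmx_cmul hd; move: aA; rewrite inE => /forall_inP ->.
Qed.

Lemma orthset_restr_sub (A : {set vec l r}) :
  submod_closed A -> Z2d d :&: orthset (restr A d) \subset dimage d (orthset A).
Proof.
move=> Asub; set W := dimage d (orthset A).
have Wsub : submod_closed W by apply/dimage_submod_closed/orthset_submod_closed.
apply/subsetP => x; rewrite !inE => /andP [/eqP xd /forall_inP x_orth].
rewrite -(orthsetK Wsub) inE; apply/forall_inP => h.
rewrite inE => /forall_inP h_orth.
have dh_A : cmul d h \in A.
  rewrite -(orthsetK Asub) inE; apply/forall_inP => a aA.
  by rewrite dotmx_cmul h_orth // imset_f.
by rewrite -xd dotmx_cmul x_orth // in_setI dh_A cmul_Z2d.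
Qed.

End Mask.

Theorem mainTheorem13 (l r : nat) (d : vec l r) (A : {set vec l r}) :
  is_subgroup A ->
  dimage d (perp A) = perp_d d (restr A d).
Proof.
move=> /is_subgroup_submod_closed Asub.
rewrite perpE perp_dE; apply/eqP; rewrite eqEsubset.
by rewrite dimage_orthset_sub orthset_restr_sub.
Qed.
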